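(* Let $C=w_1-\dots-w_m$ be a chain with $m\ge 2$ edges and positive weights. Then $C$ is extremal iff there is no admissible decomposition of $C$ into two subchains.
   Context: For a chain $C'=v_1-\dots-v_r$ ($r\ge 2$, positive weights): $L_1(C')=\max\{\sum_{i=1}^r v_ix_i : x\in\mathbb{R}^r,\ x_i^2+x_{i+1}^2\le 1\ \forall\,1\le i\le r-1\}$; $L_\emptyset(C')=\sqrt{(\sum_{i\text{ odd}}v_i)^2+(\sum_{i\text{ even}}v_i)^2}$; $C'$ is extremal if $L_1(C')=L_\emptyset(C')$. A decomposition of $C$ into $p+1$ subchains is given by integers $0=i_0<i_1<\dots<i_p<i_{p+1}=m$, with $C_j=w_{i_{j-1}+1}-\dots-w_{i_j}$. Let $\tilde\Sigma_{\rm odd}(C_j)=\sum\{w_i : i_{j-1}<i\le i_j,\ i\text{ odd}\}$, $\tilde\Sigma_{\rm even}(C_j)=\sum\{w_i : i_{j-1}<i\le i_j,\ i\text{ even}\}$ (parity with respect to the numbering in $C$), and $\Delta_j=\tilde\Sigma_{\rm even}(C_j)\tilde\Sigma_{\rm odd}(C_{j+1})-\tilde\Sigma_{\rm even}(C_{j+1})\tilde\Sigma_{\rm odd}(C_j)$ for $1\le j\le p$. The decomposition is admissible if every $C_j$ has at least two edges and, for every $1\le j\le p$, $\Delta_j<0$ when $i_j$ is even and $\Delta_j>0$ when $i_j$ is odd. *)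

From mathcomp Require Import all_boot all_order all_algebra.
From mathcomp Require Import reals.
Set Implicit Arguments. Unset Strict Implicit. Unset Printing Implicit Defensive.
Import Order.TTheory GRing.Theory Num.Theory.
Local Open Scope ring_scope.

(* A chain v_1 - ... - v_r is represented by the sequence v : seq R with
   v_i = v`_(i-1) (0-based storage).  Hence the paper's index i (1-based) is
   odd iff the 0-based index i-1 is even. *)

Section Chains.
Variable R : realType.

(* objective  sum_{i=1}^r v_i x_i  (x_i stored as x (i-1)) *)
Definition chain_obj (v : seq R) (x : nat -> R) : R :=
  \sum_(i < size v) v`_i * x i.

Definition chain_feasible (r : nat) (x : nat -> R) : Prop :=
  forall i : nat, (i.+1 < r)%N -> x i ^+ 2 + x i.+1 ^+ 2 <= 1.

Definition is_L1 (v : seq R) (L : R) : Prop :=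
  (exists x, chain_feasible (size v) x /\ chain_obj v x = L) /\
  (forall x, chain_feasible (size v) x -> chain_obj v x <= L).

Definition sum_odd (v : seq R) : R := \sum_(i < size v | ~~ odd i) v`_i.   (* 1-based odd *)
Definition sum_even (v : seq R) : R := \sum_(i < size v | odd i) v`_i.    (* 1-based even *)
Definition L_empty (v : seq R) : R :=
  Num.sqrt (sum_odd v ^+ 2 + sum_even v ^+ 2).

Definition extremal (v : seq R) : Prop := is_L1 v (L_empty v).

(* Sums over the subchain w_{a+1} - ... - w_b of w, parity w.r.t. the
   numbering in w (1-based index i+1 for storage index i). *)
Definition tsum_odd (w : seq R) (a b : nat) : R :=
  \sum_(a <= i < b | ~~ odd i) w`_i.
Definition tsum_even (w : seq R) (a b : nat) : R :=
  \sum_(a <= i < b | odd i) w`_i.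

(* Decomposition of w (m = size w) into two subchains given by
   0 = i_0 < i_1 = k < i_2 = m :  C_1 = w_1..w_k, C_2 = w_{k+1}..w_m. *)
Definition Delta2 (w : seq R) (k : nat) : R :=
  tsum_even w 0 k * tsum_odd w k (size w) - tsum_even w k (size w) * tsum_odd w 0 k.

Definition admissible_decomp2 (w : seq R) (k : nat) : Prop :=
  [/\ (0 < k)%N, (k < size w)%N,
      (2 <= k)%N, (2 <= size w - k)%N &
      (if odd k then 0 < Delta2 w k else Delta2 w k < 0)].

End Chains.

(* Let A and B be the sums of the odd- and even-numbered weights, so that
   L_empty = |(A, B)|, attained at the point alternating A/L_empty and B/L_empty.
   If the chain splits admissibly, put on each part the corresponding optimal
   point of that part: the sign condition on Delta is exactly the constraint
   across the split, and the objective |(A1, B1)| + |(A2, B2)| exceeds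
   |(A1 + A2, B1 + B2)| since the two vectors are not parallel.
   Conversely, summation by parts writes A B * sum_i w_i x_i as
   sum_k s_k (y_(k-1) x_(k-1) + y_k x_k), where y alternates A, B and
   s_k = +-Delta_k is nonnegative when no split is admissible (and at the two
   ends of the chain); Cauchy-Schwarz bounds each bracket by |(A, B)|. *)

From mathcomp Require Import all_boot all_order all_algebra.
From mathcomp Require Import reals.
From mathcomp Require Import ring lra zify.
Set Implicit Arguments. Unset Strict Implicit. Unset Printing Implicit Defensive.
Import Order.TTheory GRing.Theory Num.Theory.
Local Open Scope ring_scope.

Section EuclideanPlane.
Variable R : rcfType.
Implicit Types a b p q : R.

Definition norm2 a b : R := Num.sqrt (a ^+ 2 + b ^+ 2).

Lemma norm2C a b : norm2 a b = norm2 b a.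
Proof. by rewrite /norm2 addrC. Qed.

Lemma norm2_ge0 a b : 0 <= norm2 a b.
Proof. exact: sqrtr_ge0. Qed.

Lemma sqr_norm2 a b : norm2 a b ^+ 2 = a ^+ 2 + b ^+ 2.
Proof. by rewrite sqr_sqrtr // addr_ge0 ?sqr_ge0. Qed.

Lemma norm2_gt0 a b : 0 < a -> 0 < norm2 a b.
Proof. by move=> a_gt0; rewrite sqrtr_gt0 ltr_pwDl ?sqr_ge0 ?exprn_gt0. Qed.

Lemma cauchy_schwarz2 a b p q : p ^+ 2 + q ^+ 2 <= 1 -> a * p + b * q <= norm2 a b.
Proof.
move=> pq_le1; have := sqr_norm2 a b; have := norm2_ge0 a b.
have := sqr_ge0 (a * q - b * p); nra.
Qed.

Lemma dot_unit_norm2 a b : 0 < norm2 a b ->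
  a * (a / norm2 a b) + b * (b / norm2 a b) = norm2 a b.
Proof.
move=> n_gt0; rewrite !mulrA -mulrDl -!expr2 -sqr_norm2.
by rewrite expr2 mulfK ?gt_eqF.
Qed.

Lemma unit_norm2 a b : 0 < norm2 a b ->
  (a / norm2 a b) ^+ 2 + (b / norm2 a b) ^+ 2 = 1.
Proof.
move=> n_gt0; rewrite !expr_div_n -mulrDl -sqr_norm2 divff //.
by rewrite expf_neq0 ?gt_eqF.
Qed.

Lemma unit_mixed_le1 p1 q1 p2 q2 : 0 < norm2 p1 q1 -> 0 < norm2 p2 q2 ->
  0 <= p1 * q2 -> p1 * q2 <= q1 * p2 ->
  (p1 / norm2 p1 q1) ^+ 2 + (q2 / norm2 p2 q2) ^+ 2 <= 1.
Proof.
move=> n1_gt0 n2_gt0 h0; rewrite -subr_ge0 => h.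
have N_gt0 : 0 < norm2 p1 q1 ^+ 2 * norm2 p2 q2 ^+ 2 by rewrite mulr_gt0 ?exprn_gt0.
have -> : (p1 / norm2 p1 q1) ^+ 2 + (q2 / norm2 p2 q2) ^+ 2 =
    (p1 ^+ 2 * norm2 p2 q2 ^+ 2 + q2 ^+ 2 * norm2 p1 q1 ^+ 2) /
    (norm2 p1 q1 ^+ 2 * norm2 p2 q2 ^+ 2).
  by field; rewrite !gt_eqF.
rewrite ler_pdivrMr // mul1r !sqr_norm2.
have := mulr_ge0 (h : 0 <= q1 * p2 - p1 * q2) h0.
nra.
Qed.

Lemma norm2D_lt a1 b1 a2 b2 : 0 <= a1 * a2 + b1 * b2 -> a1 * b2 != b1 * a2 ->
  norm2 (a1 + a2) (b1 + b2) < norm2 a1 b1 + norm2 a2 b2.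
Proof.
move=> dot_ge0 cross_neq0.
have cross_gt0 : 0 < (a1 * b2 - b1 * a2) ^+ 2 by rewrite exprn_even_gt0 // subr_eq0.
have dot_lt : a1 * a2 + b1 * b2 < norm2 a1 b1 * norm2 a2 b2.
  rewrite -(ltr_pXn2r (_ : 0 < 2)%N) ?nnegrE ?mulr_ge0 ?norm2_ge0 //.
  by rewrite exprMn !sqr_norm2; lra.
rewrite -(ltr_pXn2r (_ : 0 < 2)%N) ?nnegrE ?addr_ge0 ?norm2_ge0 //.
by rewrite sqrrD !sqr_norm2; lra.
Qed.

Definition alt (p q : R) (i : nat) : R := if odd i then q else p.

Definition unit_alt p q (i : nat) : R := alt p q i / norm2 p q.

Lemma norm2_alt p q i : norm2 (alt p q i) (alt p q i.+1) = norm2 p q.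
Proof. by rewrite /alt /=; case: (odd i); rewrite // norm2C. Qed.

Lemma unit_altE p q i : unit_alt p q i = alt (p / norm2 p q) (q / norm2 p q) i.
Proof. by rewrite /unit_alt /alt; case: (odd i). Qed.

Lemma unit_alt_sqrD p q i : 0 < norm2 p q ->
  unit_alt p q i ^+ 2 + unit_alt p q i.+1 ^+ 2 = 1.
Proof. by rewrite /unit_alt -(norm2_alt p q i); apply: unit_norm2. Qed.

Lemma alt_dot_unit_alt p q i : 0 < norm2 p q ->
  alt p q i * unit_alt p q i + alt p q i.+1 * unit_alt p q i.+1 = norm2 p q.
Proof. by rewrite /unit_alt -(norm2_alt p q i); apply: dot_unit_norm2. Qed.

Lemma unit_alt_cross_le1 p1 q1 p2 q2 k : (0 < k)%N ->
  0 < p1 -> 0 < q1 -> 0 < p2 -> 0 < q2 ->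
  (if odd k then p1 * q2 <= q1 * p2 else q1 * p2 <= p1 * q2) ->
  unit_alt p1 q1 k.-1 ^+ 2 + unit_alt p2 q2 k ^+ 2 <= 1.
Proof.
case: k => // k _ p1_gt0 q1_gt0 p2_gt0 q2_gt0; rewrite /unit_alt /alt /=.
case: odd => /= cross_le.
  rewrite [norm2 p1 _]norm2C [norm2 p2 _]norm2C.
  by apply: unit_mixed_le1; rewrite // ?norm2_gt0 // mulr_ge0 // ltW.
by apply: unit_mixed_le1; rewrite // ?norm2_gt0 // mulr_ge0 // ltW.
Qed.

End EuclideanPlane.

Lemma summation_by_parts (R : comPzRingType) (E t : nat -> R) n : E 0%N = 0 ->
  \sum_(0 <= i < n.+1) (E i + E i.+1) * t i =
  \sum_(0 <= i < n) E i.+1 * (t i + t i.+1) + E n.+1 * t n.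
Proof.
move=> E0; elim: n => [|n IHn]; first by rewrite big_nat1 big_geq // E0 !add0r.
by rewrite big_nat_recr //= IHn [in RHS]big_nat_recr //=; ring.
Qed.

Lemma chain_feasible_glue (R : realType) r k (f g : nat -> R) :
  (forall i, f i ^+ 2 + f i.+1 ^+ 2 <= 1) -> (forall i, g i ^+ 2 + g i.+1 ^+ 2 <= 1) ->
  f k.-1 ^+ 2 + g k ^+ 2 <= 1 ->
  chain_feasible r (fun i => if (i < k)%N then f i else g i).
Proof.
move=> f_feas g_feas fg_feas i _ /=.
by case: (ltngtP i.+1 k) => // eq_i1k; rewrite -eq_i1k in fg_feas.
Qed.

Section ChainSums.
Variables (R : realType) (w : seq R).

Lemma tsum_oddSr a n : (a <= n)%N ->
  tsum_odd w a n.+1 = tsum_odd w a n + (if odd n then 0 else w`_n).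
Proof.
by move=> le_an; rewrite /tsum_odd big_mkcond [in RHS]big_mkcond big_nat_recr //=; case: odd.
Qed.

Lemma tsum_evenSr a n : (a <= n)%N ->
  tsum_even w a n.+1 = tsum_even w a n + (if odd n then w`_n else 0).
Proof.
by move=> le_an; rewrite /tsum_even big_mkcond [in RHS]big_mkcond big_nat_recr //=; case: odd.
Qed.

Lemma tsum_odd_cat a k b : (a <= k)%N -> (k <= b)%N ->
  tsum_odd w a b = tsum_odd w a k + tsum_odd w k b.
Proof. exact: big_cat_nat. Qed.

Lemma tsum_even_cat a k b : (a <= k)%N -> (k <= b)%N ->
  tsum_even w a b = tsum_even w a k + tsum_even w k b.
Proof. exact: big_cat_nat. Qed.

Lemma sum_oddE : sum_odd w = tsum_odd w 0 (size w).
Proof. by rewrite /tsum_odd big_mkord. Qed.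

Lemma sum_evenE : sum_even w = tsum_even w 0 (size w).
Proof. by rewrite /tsum_even big_mkord. Qed.

Lemma chain_objE x : chain_obj w x = \sum_(0 <= i < size w) w`_i * x i.
Proof. by rewrite /chain_obj big_mkord. Qed.

Lemma sum_alt a b (p q : R) :
  \sum_(a <= i < b) w`_i * alt p q i = tsum_odd w a b * p + tsum_even w a b * q.
Proof.
rewrite (bigID odd) /= addrC /tsum_odd /tsum_even !mulr_suml.
by congr (_ + _); apply: eq_bigr => i; rewrite /alt; [move/negbTE|] => ->.
Qed.

Lemma sum_unit_alt a b : 0 < norm2 (tsum_odd w a b) (tsum_even w a b) ->
  \sum_(a <= i < b) w`_i * unit_alt (tsum_odd w a b) (tsum_even w a b) i =
  norm2 (tsum_odd w a b) (tsum_even w a b).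
Proof.
under eq_bigr do rewrite unit_altE.
by rewrite sum_alt; apply: dot_unit_norm2.
Qed.

Hypothesis w_gt0 : forall i, (i < size w)%N -> 0 < w`_i.

(* A window of two consecutive weights contains one weight of each parity. *)
Lemma tsum_gt0 a b : (a.+2 <= b <= size w)%N ->
  0 < tsum_odd w a b /\ 0 < tsum_even w a b.
Proof.
case/andP=> le_a2b le_bw.
have w_ge0 P : 0 <= \sum_(a.+2 <= i < b | P i) w`_i.
  rewrite big_nat_cond; apply: sumr_ge0 => i /andP[/andP[_ lt_ib] _].
  by rewrite ltW // w_gt0 // (leq_trans lt_ib).
have wa_gt0 : 0 < w`_a by rewrite w_gt0 // (leq_trans _ le_bw) // ltnW.
have wa1_gt0 : 0 < w`_a.+1 by rewrite w_gt0 // (leq_trans _ le_bw).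
have two_terms P : \sum_(a <= i < a.+2 | P i) w`_i =
    (if P a then w`_a else 0) + (if P a.+1 then w`_a.+1 else 0).
  by rewrite big_mkcond big_nat_recr // big_nat1.
rewrite /tsum_odd /tsum_even !(big_cat_nat (leqW (leqnSn a)) le_a2b) /=.
rewrite !two_terms /=.
have := w_ge0 odd; have := w_ge0 (fun i => ~~ odd i).
by case: (odd a) => /=; lra.
Qed.

End ChainSums.

Section SignedDelta.
Variables (R : realType) (w : seq R).

Local Notation A := (sum_odd w).
Local Notation B := (sum_even w).

Definition sDelta2 k : R := if odd k then - Delta2 w k else Delta2 w k.

Lemma admissible_decomp2E k : admissible_decomp2 w k <->
  [/\ (2 <= k)%N, (k.+2 <= size w)%N & sDelta2 k < 0].
Proof.
rewrite /admissible_decomp2 /sDelta2; case: odd; rewrite ?oppr_lt0; split.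
all: by case=> *; split => //; lia.
Qed.

Lemma Delta2_prefix k : (k <= size w)%N ->
  Delta2 w k = tsum_even w 0 k * A - tsum_odd w 0 k * B.
Proof.
move=> le_km; rewrite sum_oddE sum_evenE /Delta2.
by rewrite (tsum_odd_cat w (leq0n k) le_km) (tsum_even_cat w (leq0n k) le_km); ring.
Qed.

Lemma sDelta20 : sDelta2 0 = 0.
Proof.
by rewrite /sDelta2 /Delta2 /tsum_odd /tsum_even !(big_geq (leqnn 0)) mul0r mulr0 subrr.
Qed.

Lemma sDelta2_size : sDelta2 (size w) = 0.
Proof.
rewrite /sDelta2 /Delta2 /tsum_odd /tsum_even !(big_geq (leqnn _)).
by rewrite mulr0 mul0r subrr oppr0 if_same.
Qed.

Lemma sDelta2_step i : (i < size w)%N ->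
  (sDelta2 i + sDelta2 i.+1) * alt A B i = w`_i * (A * B).
Proof.
move=> lt_im; rewrite /sDelta2 !Delta2_prefix // 1?ltnW //.
by rewrite tsum_oddSr // tsum_evenSr // /alt /=; case: odd => /=; ring.
Qed.

Lemma chain_obj_sDelta2 x : (0 < size w)%N ->
  chain_obj w x * (A * B) =
  \sum_(0 <= i < (size w).-1) sDelta2 i.+1 * (alt A B i * x i + alt A B i.+1 * x i.+1).
Proof.
case Em: (size w) => [//|n] _; rewrite chain_objE Em mulr_suml /=.
transitivity (\sum_(0 <= i < n.+1) (sDelta2 i + sDelta2 i.+1) * (alt A B i * x i)).
  by apply: eq_big_nat => i /andP[_ lt_in]; rewrite [RHS]mulrA sDelta2_step ?Em //; ring.
by rewrite summation_by_parts ?sDelta20 // -Em sDelta2_size mul0r addr0.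
Qed.

End SignedDelta.

Section Extremality.
Variables (R : realType) (w : seq R).
Hypothesis w_gt0 : forall i, (i < size w)%N -> 0 < w`_i.

Lemma admissible_obj_gt k : admissible_decomp2 w k ->
  exists2 x, chain_feasible (size w) x & L_empty w < chain_obj w x.
Proof.
move=> [k_gt0 lt_km le2k le2mk Delta_sgn].
have [A1_gt0 B1_gt0] : 0 < tsum_odd w 0 k /\ 0 < tsum_even w 0 k.
  by apply: tsum_gt0 => //; lia.
have [A2_gt0 B2_gt0] : 0 < tsum_odd w k (size w) /\ 0 < tsum_even w k (size w).
  by apply: tsum_gt0 => //; lia.
rewrite /Delta2 in Delta_sgn.
set A1 := tsum_odd w 0 k in A1_gt0 Delta_sgn *.
set B1 := tsum_even w 0 k in B1_gt0 Delta_sgn *.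
set A2 := tsum_odd w k (size w) in A2_gt0 Delta_sgn *.
set B2 := tsum_even w k (size w) in B2_gt0 Delta_sgn *.
have n1_gt0 := norm2_gt0 B1 A1_gt0; have n2_gt0 := norm2_gt0 B2 A2_gt0.
have cross_ne : A1 * B2 != B1 * A2.
  by apply/eqP; case: odd Delta_sgn => ? cross_eq; lra.
exists (fun i => if (i < k)%N then unit_alt A1 B1 i else unit_alt A2 B2 i).
  apply: chain_feasible_glue => [i|i|]; rewrite ?unit_alt_sqrD //.
  by apply: unit_alt_cross_le1 => //; case: odd Delta_sgn => ?; lra.
rewrite chain_objE (big_cat_nat (leq0n k) (ltnW lt_km)) /=.
rewrite (eq_big_nat _ _ (F2 := fun i => w`_i * unit_alt A1 B1 i)); last first.
  by move=> i /andP[_ ->].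
rewrite [X in _ < _ + X](eq_big_nat _ _ (F2 := fun i => w`_i * unit_alt A2 B2 i)); last first.
  by move=> i /andP[le_ki _]; rewrite ltnNge le_ki.
rewrite !sum_unit_alt // /L_empty -/(norm2 _ _) sum_oddE sum_evenE.
rewrite (tsum_odd_cat w (leq0n k) (ltnW lt_km)) (tsum_even_cat w (leq0n k) (ltnW lt_km)).
apply: norm2D_lt; first by rewrite addr_ge0 // mulr_ge0 // ltW.
exact: cross_ne.
Qed.

Hypothesis size_ge2 : (2 <= size w)%N.

Local Notation A := (sum_odd w).
Local Notation B := (sum_even w).

Lemma sum_odd_even_gt0 : 0 < A /\ 0 < B.
Proof. by rewrite sum_oddE sum_evenE; apply: (tsum_gt0 w_gt0); rewrite size_ge2 /=. Qed.

Lemma L_empty_gt0 : 0 < L_empty w.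
Proof. by apply: norm2_gt0; case: sum_odd_even_gt0. Qed.

Lemma unit_alt_feasible : chain_feasible (size w) (unit_alt A B).
Proof. by move=> i _; rewrite unit_alt_sqrD // L_empty_gt0. Qed.

Lemma chain_obj_unit_alt : chain_obj w (unit_alt A B) = L_empty w.
Proof.
have := L_empty_gt0; rewrite /L_empty -/(norm2 A B).
by rewrite chain_objE sum_oddE sum_evenE; apply: sum_unit_alt.
Qed.

Hypothesis no_admissible : ~ (exists k, admissible_decomp2 w k).

Lemma sDelta2_ge0 k : (0 < k < size w)%N -> 0 <= sDelta2 w k.
Proof.
move=> /andP[k_gt0 lt_km].
have [A_gt0 B_gt0] := sum_odd_even_gt0.
have wAB_gt0 i : (i < size w)%N -> 0 < w`_i * (A * B).
  by move=> lt_im; rewrite !mulr_gt0 ?w_gt0.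
have alt_gt0 i : 0 < alt A B i by rewrite /alt; case: odd.
have [->|k_ne1] := eqVneq k 1%N.
  have := sDelta2_step (leq_trans (ltn0Sn 1) size_ge2); rewrite sDelta20 add0r => eq_w0.
  by rewrite ltW // -(pmulr_lgt0 _ (alt_gt0 0%N)) eq_w0 wAB_gt0 // (leq_trans _ size_ge2).
have [ek|k1_ne_m] := eqVneq k.+1 (size w).
  have := sDelta2_step lt_km; rewrite ek sDelta2_size addr0 => eq_wk.
  by rewrite ltW // -(pmulr_lgt0 _ (alt_gt0 k)) eq_wk wAB_gt0.
rewrite leNgt; apply/negP => neg; apply: no_admissible; exists k.
by apply/admissible_decomp2E; split=> //; lia.
Qed.

Lemma no_admissible_obj_le x : chain_feasible (size w) x -> chain_obj w x <= L_empty w.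
Proof.
move=> x_feas.
have [A_gt0 B_gt0] := sum_odd_even_gt0.
have m_gt0 : (0 < size w)%N by rewrite (leq_trans _ size_ge2).
rewrite -(ler_pM2r (mulr_gt0 A_gt0 B_gt0)) -chain_obj_unit_alt !chain_obj_sDelta2 //.
apply: ler_sum_nat => i /andP[_ lt_i]; apply: ler_wpM2l.
  by apply: sDelta2_ge0; lia.
rewrite alt_dot_unit_alt ?L_empty_gt0 // -(norm2_alt A B i).
by apply: cauchy_schwarz2; apply: x_feas; lia.
Qed.

End Extremality.

Theorem mainTheorem9 (R : realType) (w : seq R) :
  (2 <= size w)%N ->
  (forall i : nat, (i < size w)%N -> 0 < w`_i) ->
  (extremal w <-> ~ (exists k : nat, admissible_decomp2 w k)).
Proof.
move=> size_ge2 w_gt0; split.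
- move=> [_ L1_max] [k /(admissible_obj_gt w_gt0)[x /L1_max]].
  by rewrite leNgt => /negP.
- move=> no_adm; split; last by move=> x; apply: no_admissible_obj_le.
  exists (unit_alt (sum_odd w) (sum_even w)).
  by split; [apply: unit_alt_feasible | apply: chain_obj_unit_alt].
Qed.
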